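(* $Spec_B(A)$ is a topological space whose closed subsets are the sets $\mathcal{V}(b)=\{p\in Spec_B(A)\mid b\leq p\}$ with $b\in B$. Dually, its open subsets are the sets $\mathcal{U}(b)=\{p\in Spec_B(A)\mid b\nleq p\}$ with $b\in B$.
   Context: Let $A$ be a quasi-quantale, i.e. a complete $\bigvee$-semilattice (with bottom $0$ and top $1$) equipped with an associative product $A\times A\to A$ such that $(\bigvee X)a=\bigvee\{xa\mid x\in X\}$ and $a(\bigvee Y)=\bigvee\{ay\mid y\in Y\}$ for all directed subsets $X,Y\subseteq A$ and all $a\in A$. Let $B$ be a subquasi-quantale of $A$, i.e. a sub-$\bigvee$-semilattice of $A$ closed under the product on which these two directed distributive laws hold for all directed $X,Y\subseteq B$ and $a\in B$. Assume moreover that $0,1\in B$ and that $1b\leq b$ and $b1\leq b$ for all $b\in B$. An element $1\neq p\in A$ is prime relative to $B$ if whenever $ab\leq p$ with $a,b\in B$ then $a\leq p$ or $b\leq p$; $Spec_B(A)$ denotes the set of all elements of $A$ that are prime relative to $B$. *)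

Set Implicit Arguments.

Section QQ.
Variable A : Type.
Variable le : A -> A -> Prop.
Variable sup : (A -> Prop) -> A.
Variable mul : A -> A -> A.

Definition is_sup (X : A -> Prop) (s : A) : Prop :=
  (forall x, X x -> le x s) /\ (forall u, (forall x, X x -> le x u) -> le s u).

Definition directed (X : A -> Prop) : Prop :=
  (exists x, X x) /\
  (forall x y, X x -> X y -> exists z, X z /\ le x z /\ le y z).

Definition bot : A := sup (fun _ => False).
Definition top : A := sup (fun _ => True).

Definition quasi_quantale : Prop :=
  (forall x, le x x) /\
  (forall x y z, le x y -> le y z -> le x z) /\
  (forall x y, le x y -> le y x -> x = y) /\
  (forall X, is_sup X (sup X)) /\
  (forall a b c, mul (mul a b) c = mul a (mul b c)) /\
  (forall X a, directed X ->
     mul (sup X) a = sup (fun y => exists x, X x /\ y = mul x a)) /\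
  (forall Y a, directed Y ->
     mul a (sup Y) = sup (fun z => exists y, Y y /\ z = mul a y)).

Definition subquasi_quantale (B : A -> Prop) : Prop :=
  (forall X, (forall x, X x -> B x) -> B (sup X)) /\
  (forall a b, B a -> B b -> B (mul a b)) /\
  (forall X a, (forall x, X x -> B x) -> directed X -> B a ->
     mul (sup X) a = sup (fun y => exists x, X x /\ y = mul x a)) /\
  (forall Y a, (forall y, Y y -> B y) -> directed Y -> B a ->
     mul a (sup Y) = sup (fun z => exists y, Y y /\ z = mul a y)).

Definition prime_rel (B : A -> Prop) (p : A) : Prop :=
  p <> top /\
  forall a b, B a -> B b -> le (mul a b) p -> le a p \/ le b p.

Definition Spec (B : A -> Prop) : A -> Prop := fun p => prime_rel B p.

Definition VV (B : A -> Prop) (b : A) : A -> Prop :=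
  fun p => Spec B p /\ le b p.

Definition UU (B : A -> Prop) (b : A) : A -> Prop :=
  fun p => Spec B p /\ ~ le b p.

End QQ.

Definition same_set {T : Type} (S S' : T -> Prop) : Prop := forall x, S x <-> S' x.

(* The family is assumed to be closed under extensional equality. *)
Definition closed_sets_topology {T : Type} (X : T -> Prop)
  (C : (T -> Prop) -> Prop) : Prop :=
  (forall S, C S -> forall x, S x -> X x) /\
  C (fun _ => False) /\
  C X /\
  (forall F : (T -> Prop) -> Prop, (forall S, F S -> C S) ->
     C (fun x => X x /\ forall S, F S -> S x)) /\
  (forall S S', C S -> C S' -> C (fun x => S x \/ S' x)).

Definition open_sets_topology {T : Type} (X : T -> Prop)
  (O : (T -> Prop) -> Prop) : Prop :=
  (forall S, O S -> forall x, S x -> X x) /\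
  O (fun _ => False) /\
  O X /\
  (forall F : (T -> Prop) -> Prop, (forall S, F S -> O S) ->
     O (fun x => exists S, F S /\ S x)) /\
  (forall S S', O S -> O S' -> O (fun x => S x /\ S' x)).

From Stdlib Require Import Classical.

(* The sets V(b) are closed under the topology operations because B is:
   V(top) is empty, V(bot) is everything, an intersection of V(c)'s is
   V(sup c), and V(a) ∪ V(b) = V(ab).  The last equation is where primality
   (for ⊆) and the unit-like behaviour of top (for ⊇, via a b <= a top <= a)
   enter.  The U(b) are the complements of the V(b), and complements of the
   closed sets of any topology form its open sets. *)

Lemma open_sets_of_closed_sets {T : Type} (X : T -> Prop)
    (C : (T -> Prop) -> Prop) :
  closed_sets_topology X C ->
  open_sets_topology X
    (fun S => exists K, C K /\ same_set S (fun x => X x /\ ~ K x)).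
Proof.
  intros (C_sub & C_empty & C_full & C_inter & C_union).
  split; [|split; [|split; [|split]]].
  - intros S [K [_ HS]] x Sx. now apply HS.
  - exists X. split; [exact C_full|]. intro x. tauto.
  - exists (fun _ => False). split; [exact C_empty|]. intro x. tauto.
  - intros F HF.
    set (G := fun K => C K /\ exists S, F S /\ same_set S (fun x => X x /\ ~ K x)).
    exists (fun x => X x /\ forall K, G K -> K x).
    split; [now apply C_inter; intros K [CK _]|].
    intro x. split.
    + intros [S [FS Sx]].
      destruct (HF S FS) as [K [CK HS]].
      destruct (proj1 (HS x) Sx) as [Xx nKx].
      split; [exact Xx|]. intros [_ Hall].
      apply nKx, Hall. split; [exact CK|]. now exists S.
    + intros [Xx nI].
      assert (HK : exists K, G K /\ ~ K x).
      { apply NNPP. intros Hno. apply nI. split; [exact Xx|].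
        intros K GK. apply NNPP. intros nKx. apply Hno. now exists K. }
      destruct HK as [K [[_ [S [FS HS]]] nKx]].
      exists S. split; [exact FS|]. now apply HS.
  - intros S S' [K [CK HS]] [K' [CK' HS']].
    exists (fun x => K x \/ K' x). split; [now apply C_union|].
    intro x. rewrite (HS x), (HS' x). tauto.
Qed.

Lemma open_sets_topology_ext {T : Type} (X : T -> Prop)
    (O O' : (T -> Prop) -> Prop) :
  (forall S, O S <-> O' S) ->
  open_sets_topology X O -> open_sets_topology X O'.
Proof.
  intros HO (O_sub & O_empty & O_full & O_union & O_inter).
  split; [|split; [|split; [|split]]].
  - intros S O'S. now apply O_sub, HO.
  - now apply HO.
  - now apply HO.
  - intros F HF. apply HO, O_union. intros S FS. now apply HO, HF.
  - intros S S' O'S O'S'. now apply HO, O_inter; apply HO.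
Qed.

Section SpecTopology.

Variables (A : Type) (le : A -> A -> Prop) (sup : (A -> Prop) -> A)
  (mul : A -> A -> A) (B : A -> Prop).

Hypothesis HQ : quasi_quantale le sup mul.
Hypothesis HB : subquasi_quantale le sup mul B.

Local Notation top := (top sup).
Local Notation bot := (bot sup).
Local Notation Spec := (Spec le sup mul B).
Local Notation VV := (VV le sup mul B).
Local Notation UU := (UU le sup mul B).

Lemma le_refl x : le x x.
Proof. now destruct HQ as (H & _). Qed.

Lemma le_trans x y z : le x y -> le y z -> le x z.
Proof. destruct HQ as (_ & H & _). apply H. Qed.

Lemma le_antisym x y : le x y -> le y x -> x = y.
Proof. destruct HQ as (_ & _ & H & _). apply H. Qed.

Lemma sup_upper (X : A -> Prop) x : X x -> le x (sup X).
Proof. destruct HQ as (_ & _ & _ & Hs & _). apply (proj1 (Hs X)). Qed.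

Lemma sup_least (X : A -> Prop) u : (forall x, X x -> le x u) -> le (sup X) u.
Proof. destruct HQ as (_ & _ & _ & Hs & _). apply (proj2 (Hs X)). Qed.

Lemma le_top x : le x top.
Proof. now apply sup_upper. Qed.

Lemma bot_le x : le bot x.
Proof. now apply sup_least. Qed.

Lemma B_sup (X : A -> Prop) : (forall x, X x -> B x) -> B (sup X).
Proof. destruct HB as (H & _). apply H. Qed.

Lemma B_mul a b : B a -> B b -> B (mul a b).
Proof. destruct HB as (_ & H & _). apply H. Qed.

(* b <= c makes {b, c} a directed subset of B with join c, so distributivity
   over directed joins yields monotonicity. *)
Lemma sup_pair_le b c : le b c -> sup (fun y => y = b \/ y = c) = c.
Proof.
  intros bc. apply le_antisym.
  - apply sup_least. intros y [-> | ->]; [exact bc | apply le_refl].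
  - apply sup_upper. now right.
Qed.

Lemma directed_pair_le b c : le b c -> directed le (fun y => y = b \/ y = c).
Proof.
  intros bc. split; [now exists b; left|].
  assert (Hc : forall x, x = b \/ x = c -> le x c).
  { intros x [-> | ->]; [exact bc | apply le_refl]. }
  intros x y Hx Hy. exists c. split; [now right|]. auto.
Qed.

Lemma mul_monotone_r a b c :
  B a -> B b -> B c -> le b c -> le (mul a b) (mul a c).
Proof.
  intros Ba Bb Bc bc. destruct HB as (_ & _ & _ & distr_r).
  rewrite <- (sup_pair_le b c bc), distr_r; auto using directed_pair_le.
  - apply sup_upper. exists b. split; [now left | reflexivity].
  - now intros y [-> | ->].
Qed.

Lemma mul_monotone_l a b c :
  B a -> B b -> B c -> le b c -> le (mul b a) (mul c a).
Proof.
  intros Ba Bb Bc bc. destruct HB as (_ & _ & distr_l & _).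
  rewrite <- (sup_pair_le b c bc), distr_l; auto using directed_pair_le.
  - apply sup_upper. exists b. split; [now left | reflexivity].
  - now intros y [-> | ->].
Qed.

Hypothesis B_top : B top.
Hypothesis mul_top_le : forall b, B b -> le (mul top b) b /\ le (mul b top) b.

Lemma mul_le_l a b : B a -> B b -> le (mul a b) a.
Proof.
  intros Ba Bb. apply le_trans with (mul a top).
  - apply mul_monotone_r; auto using le_top.
  - now apply mul_top_le.
Qed.

Lemma mul_le_r a b : B a -> B b -> le (mul a b) b.
Proof.
  intros Ba Bb. apply le_trans with (mul top b).
  - apply mul_monotone_l; auto using le_top.
  - now apply mul_top_le.
Qed.

Lemma Spec_top_nle p : Spec p -> ~ le top p.
Proof. intros [p_ntop _] top_p. now apply p_ntop, le_antisym; [apply le_top|]. Qed.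

Lemma VV_top : same_set (VV top) (fun _ => False).
Proof. intros p. split; [intros [Sp Hp]; exact (Spec_top_nle p Sp Hp) | easy]. Qed.

Lemma VV_bot : same_set (VV bot) Spec.
Proof. intros p. split; [now intros [Sp _] | split; auto using bot_le]. Qed.

Lemma VV_sup (P : A -> Prop) :
  same_set (VV (sup P)) (fun p => Spec p /\ forall c, P c -> le c p).
Proof.
  intros p. split.
  - intros [Sp Hp]. split; [exact Sp|].
    intros c Pc. apply le_trans with (sup P); [apply sup_upper|]; auto.
  - intros [Sp Hp]. split; [exact Sp|]. now apply sup_least.
Qed.

Lemma VV_mul a b : B a -> B b ->
  same_set (VV (mul a b)) (fun p => VV a p \/ VV b p).
Proof.
  intros Ba Bb p. split.
  - intros [Sp Hp]. destruct (proj2 Sp a b Ba Bb Hp); [left | right]; now split.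
  - intros [[Sp Hp] | [Sp Hp]]; split; auto.
    + apply le_trans with a; auto using mul_le_l.
    + apply le_trans with b; auto using mul_le_r.
Qed.

Lemma Spec_closed_sets :
  B bot ->
  closed_sets_topology Spec (fun S => exists b, B b /\ same_set S (VV b)).
Proof.
  intros B_bot. split; [|split; [|split; [|split]]].
  - intros S [b [_ HS]] p Sp. now apply HS in Sp as [Spec_p _].
  - exists top. split; [exact B_top|]. intros p. symmetry. apply VV_top.
  - exists bot. split; [exact B_bot|]. intros p. symmetry. apply VV_bot.
  - intros F HF.
    set (P := fun c => B c /\ exists S, F S /\ same_set S (VV c)).
    exists (sup P). split; [now apply B_sup; intros c [Bc _]|].
    intros p. rewrite (VV_sup P p). split.
    + intros [Sp HS]. split; [exact Sp|].
      intros c [_ [S [FS Hc]]]. now apply Hc, HS.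
    + intros [Sp Hp]. split; [exact Sp|].
      intros S FS. destruct (HF S FS) as [c [Bc Hc]].
      apply Hc. split; [exact Sp|]. apply Hp. split; [exact Bc|]. now exists S.
  - intros S S' [a [Ba HS]] [b [Bb HS']].
    exists (mul a b). split; [now apply B_mul|].
    intros p. rewrite (HS p), (HS' p). symmetry. now apply VV_mul.
Qed.

Lemma UU_iff_not_VV b p : UU b p <-> Spec p /\ ~ VV b p.
Proof. unfold UU, VV. tauto. Qed.

Lemma open_complement_iff_UU S :
  (exists K, (exists b, B b /\ same_set K (VV b)) /\
             same_set S (fun p => Spec p /\ ~ K p)) <->
  (exists b, B b /\ same_set S (UU b)).
Proof.
  split.
  - intros [K [[b [Bb HK]] HS]]. exists b. split; [exact Bb|].
    intros p. rewrite (HS p), (HK p), UU_iff_not_VV. reflexivity.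
  - intros [b [Bb HS]]. exists (VV b). split; [now exists b|].
    intros p. rewrite (HS p). apply UU_iff_not_VV.
Qed.

End SpecTopology.

Theorem proposition3p18 (A : Type) (le : A -> A -> Prop)
  (sup : (A -> Prop) -> A) (mul : A -> A -> A) (B : A -> Prop) :
  quasi_quantale le sup mul ->
  subquasi_quantale le sup mul B ->
  B (bot sup) -> B (top sup) ->
  (forall b, B b -> le (mul (top sup) b) b /\ le (mul b (top sup)) b) ->
  closed_sets_topology (Spec le sup mul B)
    (fun S => exists b, B b /\ same_set S (VV le sup mul B b)) /\
  open_sets_topology (Spec le sup mul B)
    (fun S => exists b, B b /\ same_set S (UU le sup mul B b)) /\
  (forall b p, UU le sup mul B b p <-> (Spec le sup mul B p /\ ~ VV le sup mul B b p)).
Proof.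
  intros HQ HB B_bot B_top mul_top_le.
  pose proof (Spec_closed_sets _ _ _ _ _ HQ HB B_top mul_top_le B_bot) as closed.
  split; [exact closed|]. split.
  - eapply open_sets_topology_ext; [apply open_complement_iff_UU|].
    now apply open_sets_of_closed_sets.
  - apply UU_iff_not_VV.
Qed.
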